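(* Let $F$, $H$, $X$, $\Omega$, $Q$ and the sequences generated by the IneIREG method be as described in the context, and assume $H$ is $\mu$-strongly monotone for some $\mu>0$. Let $\varepsilon>0$, let $\mathcal D_0>\varepsilon$ satisfy $\mathcal D_0\ge\overline\lambda C_HD_X/\underline\lambda$, and suppose $\eta_k\equiv\eta:=\varepsilon/(2\mathcal D_0)$ for all $k\ge0$; $\lambda_k\in[\underline\lambda,\overline\lambda]$ for all $k\ge0$ with $0<\underline\lambda\le\overline\lambda<1/L$, where $L:=L_F+\eta L_H$; and $\alpha_0\in[0,1]$ and $\alpha_{k+1}\le(1-\beta_k)\alpha_k$ for all $k\ge0$, where $\beta_k:=\big(\frac{1}{1-\lambda_k^2L^2}+\frac{1}{2\lambda_k\eta\mu}\big)^{-1}$. Define $p_{-1}:=1$, $p_k:=\big(\prod_{i=0}^k(1-\beta_i)\big)^{-1}$ for $k\ge0$, and for $k\ge1$, $\Lambda_k:=\sum_{j=0}^{k-1}\lambda_j\eta p_j$ and $\overline y_k:=\Lambda_k^{-1}\sum_{j=0}^{k-1}\lambda_j\eta p_jy_j$. Then for all $k\ge1$ satisfying $$k\ge\Big\lceil\Big(\frac{1}{1-\overline\lambda^2L^2}+\frac{\mathcal D_0}{\underline\lambda\mu\varepsilon}\Big)\log\Big(\frac{2(k+1)D_X^2\mathcal D_0}{\underline\lambda\varepsilon^2}\Big)\Big\rceil$$ we have $-B_H\,\mathrm{dist}(\overline y_k,Q)\le\mathrm{Gap}(\overline y_k,H,Q)\le\varepsilon$ and $0\le\mathrm{Gap}(\overline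 y_k,F,X)\le\varepsilon$; moreover, if $Q$ is $\sigma$-weakly sharp of order $\mathcal M\ge1$, then $\mathrm{Gap}(\overline y_k,H,Q)\ge-\big(B_H/\sigma^{1/\mathcal M}\big)\varepsilon^{1/\mathcal M}$ for such $k$.
   Context: Work in $\mathbb{R}^n$ with Euclidean inner product $\langle\cdot,\cdot\rangle$ and norm $\|\cdot\|$. The maps $F\colon \mathrm{Dom}\,F\to\mathbb{R}^n$ and $H\colon\mathrm{Dom}\,H\to\mathbb{R}^n$ are monotone and Lipschitz continuous with constants $L_F>0$ and $L_H>0$; $H$ is $\mu$-strongly monotone means $\langle H(x)-H(y),x-y\rangle\ge\mu\|x-y\|^2$ for all $x,y\in\mathrm{Dom}\,H$. $X$ is a nonempty compact convex set and $\Omega$ a nonempty closed convex set with $X\subset\Omega\subset\mathrm{Dom}\,F\cap\mathrm{Dom}\,H$; $P_X,P_\Omega$ denote orthogonal projections. $Q:=\{x\in X:\langle F(x),y-x\rangle\ge0\ \forall y\in X\}$ is assumed nonempty. $D_X:=\sup_{x,y\in X}\|x-y\|$, $C_H:=\sup_{x\in X}\|H(x)\|$, $B_H:=\sup_{x\in Q}\|H(x)\|$, $\mathrm{dist}(y,Q)$ is the Euclidean distance to $Q$. $\mathrm{Gap}(z,H,Q):=\sup_{x\in Q}\langle H(x),z-x\rangle$, $\mathrm{Gap}(z,F,X):=\sup_{x\in X}\langle F(x),z-x\rangle$. $Q$ is $\sigma$-weakly sharp of order $\mathcal M\ge1$ ($\sigma>0$) if $\langle F(x),y-x\rangle\ge\sigma\,\mathrm{dist}(y,Q)^{\mathcal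 M}$ for all $x\in Q$, $y\in X$. IneIREG method: start with $x_0=x_{-1}\in X$; for $k=0,1,\dots$, with parameters $\alpha_k\ge0$, $\lambda_k>0$, $\eta_k>0$, set $w_k=x_k+\alpha_k(x_k-x_{k-1})$, $w'_k=P_\Omega(w_k)$, $y_k=P_X\big(w_k-\lambda_k(F(w'_k)+\eta_kH(w'_k))\big)$, $x_{k+1}=P_X\big(w_k-\lambda_k(F(y_k)+\eta_kH(y_k))\big)$. *)

From HB Require Import structures.
From mathcomp Require Import all_boot all_order all_algebra.
From mathcomp Require Import all_classical all_reals all_analysis.
Set Implicit Arguments. Unset Strict Implicit. Unset Printing Implicit Defensive.
Import Order.TTheory GRing.Theory Num.Theory.
Import numFieldNormedType.Exports.
Local Open Scope classical_set_scope.
Local Open Scope ring_scope.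

Section Defs.
Variables (R : realType) (n : nat).
Notation vec := 'rV[R]_n.

Definition dotv (u v : vec) : R := \sum_(i < n) u 0 i * v 0 i.
Definition normv (u : vec) : R := Num.sqrt (dotv u u).

Definition euc_convex_set (A : set vec) : Prop :=
  forall x y t, A x -> A y -> 0 <= t -> t <= 1 -> A (t *: x + (1 - t) *: y).

Definition is_euc_projection (A : set vec) (p : vec -> vec) : Prop :=
  forall x, A (p x) /\ forall y, A y -> normv (x - p x) <= normv (x - y).

Definition op_monotone_on (D : set vec) (G : vec -> vec) : Prop :=
  forall x y, D x -> D y -> 0 <= dotv (G x - G y) (x - y).
Definition op_strongly_monotone_on (D : set vec) (G : vec -> vec) (mu : R) : Prop :=
  forall x y, D x -> D y -> mu * normv (x - y) ^+ 2 <= dotv (G x - G y) (x - y).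
Definition op_lipschitz_on (D : set vec) (G : vec -> vec) (L : R) : Prop :=
  forall x y, D x -> D y -> normv (G x - G y) <= L * normv (x - y).

Definition VIsol (F : vec -> vec) (X : set vec) : set vec :=
  [set x | X x /\ forall y, X y -> 0 <= dotv (F x) (y - x)].

Definition euc_diam (X : set vec) : R :=
  sup [set r | exists x y, X x /\ X y /\ r = normv (x - y)].
Definition euc_supnorm (H : vec -> vec) (A : set vec) : R :=
  sup [set r | exists x, A x /\ r = normv (H x)].
Definition euc_dist (y : vec) (Q : set vec) : R :=
  inf [set r | exists x, Q x /\ r = normv (y - x)].
Definition Gap (z : vec) (G : vec -> vec) (A : set vec) : R :=
  sup [set r | exists x, A x /\ r = dotv (G x) (z - x)].

Definition euc_weakly_sharp (F : vec -> vec) (X Q : set vec) (sigma M : R) : Prop :=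
  forall x y, Q x -> X y -> sigma * (euc_dist y Q `^ M) <= dotv (F x) (y - x).

(* x_{k-1}, with the convention x_{-1} = x_0 *)
Definition prev_iter (x : nat -> vec) (k : nat) : vec :=
  if k is k'.+1 then x k' else x 0%N.

End Defs.

(** Write G := F + eta H; it is (L_F + eta L_H)-Lipschitz on Omega and eta mu-strongly
    monotone on X.  The extragradient estimate for one step subtracts
    (1 - lam_k^2 L^2) |w_k - y_k|^2 + 2 lam_k eta mu |y_k - u|^2, which by the harmonic-mean
    inequality dominates beta_k |w_k - u|^2; expanding the inertial point w_k then gives,
    for every u in X,
      |x_{k+1} - u|^2 <= (1 - beta_k) (|x_k - u|^2 + alpha_k (|x_k - u|^2 - |x_{k-1} - u|^2)
                          + 2 alpha_k D_X^2) - 2 lam_k <G u, y_k - u>.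
    Multiplying by p_k and telescoping (the inertial terms are absorbed because
    p_{k-1} alpha_k is nonincreasing) bounds 2 sum_{j<k} lam_j p_j <G u, y_j - u> by
    (2k + 1) D_X^2.  As p_{k-1} >= exp (sum beta_i) and every beta_i is bounded below, the
    iteration-count condition makes this at most 2 eps Lambda_k, i.e.
    <G u, ybar_k - u> <= eta eps on X.  For u in Q the F-part is nonnegative, whence
    Gap(ybar_k, H, Q) <= eps; on X the H-part is at least -C_H D_X >= -D_0, whence
    Gap(ybar_k, F, X) <= eps.  The lower bounds follow from Cauchy-Schwarz and, under weak
    sharpness, from sigma dist(ybar_k, Q)^M <= Gap(ybar_k, F, X) <= eps. *)

From HB Require Import structures.
From mathcomp Require Import all_boot all_order all_algebra.
From mathcomp Require Import all_classical all_reals all_analysis.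
From mathcomp Require Import ring lra.
Set Implicit Arguments. Unset Strict Implicit. Unset Printing Implicit Defensive.
Import Order.TTheory GRing.Theory Num.Theory.
Import numFieldNormedType.Exports.
Local Open Scope classical_set_scope.
Local Open Scope ring_scope.

Section Euclidean.
Variables (R : realType) (n : nat).
Implicit Types (u v z : 'rV[R]_n) (a r : R).

Lemma dotvC u v : dotv u v = dotv v u.
Proof. by apply: eq_bigr => i _; rewrite mulrC. Qed.

Lemma dotvDl u v z : dotv (u + v) z = dotv u z + dotv v z.
Proof. by rewrite /dotv -big_split; apply: eq_bigr => i _; rewrite mxE mulrDl. Qed.

Lemma dotvDr u v z : dotv z (u + v) = dotv z u + dotv z v.
Proof. by rewrite dotvC dotvDl !(dotvC z). Qed.

Lemma dotvZl a u v : dotv (a *: u) v = a * dotv u v.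
Proof. by rewrite /dotv mulr_sumr; apply: eq_bigr => i _; rewrite mxE mulrA. Qed.

Lemma dotvZr a u v : dotv u (a *: v) = a * dotv u v.
Proof. by rewrite dotvC dotvZl dotvC. Qed.

Lemma dotvNl u v : dotv (- u) v = - dotv u v.
Proof. by rewrite -scaleN1r dotvZl mulN1r. Qed.

Lemma dotvNr u v : dotv u (- v) = - dotv u v.
Proof. by rewrite -scaleN1r dotvZr mulN1r. Qed.

Lemma dotvBl u v z : dotv (u - v) z = dotv u z - dotv v z.
Proof. by rewrite dotvDl dotvNl. Qed.

Lemma dotvBr u v z : dotv z (u - v) = dotv z u - dotv z v.
Proof. by rewrite dotvDr dotvNr. Qed.

Lemma dotv0l v : dotv 0 v = 0.
Proof. by rewrite -(scale0r 0) dotvZl mul0r. Qed.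

Lemma dotv_sumr u (K : nat) (c : nat -> R) (v : nat -> 'rV[R]_n) :
  dotv u (\sum_(j < K) c j *: v j) = \sum_(j < K) c j * dotv u (v j).
Proof.
elim: K => [|K IH]; first by rewrite !big_ord0 dotvC dotv0l.
by rewrite !big_ord_recr /= dotvDr IH dotvZr.
Qed.

Lemma dotv_ge0 u : 0 <= dotv u u.
Proof. by rewrite sumr_ge0 // => i _; rewrite -expr2 sqr_ge0. Qed.

Lemma dotv_eq0 u : (dotv u u == 0) = (u == 0).
Proof.
apply/idP/eqP => [|->]; last by rewrite dotv0l.
rewrite psumr_eq0 => [/allP u0|i _]; last by rewrite -expr2 sqr_ge0.
apply/rowP => i; rewrite mxE.
by move: (u0 i (mem_index_enum _)) => /=; rewrite mulf_eq0 orbb => /eqP.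
Qed.

Lemma dotv_subC u v : dotv (u - v) (u - v) = dotv (v - u) (v - u).
Proof. by rewrite -opprB dotvNl dotvNr opprK. Qed.

Lemma dotv_young u v r : 0 < r -> 2 * dotv u v <= r * dotv u u + r^-1 * dotv v v.
Proof.
move=> r0; have := dotv_ge0 (r *: u - v).
rewrite !(dotvBl, dotvBr, dotvZl, dotvZr) (dotvC v u) => h.
rewrite -(ler_pM2l r0) mulrDr !mulrA mulfV ?gt_eqF //; lra.
Qed.

Lemma normv_ge0 u : 0 <= normv u.
Proof. exact: sqrtr_ge0. Qed.

Lemma normv_sqr u : normv u ^+ 2 = dotv u u.
Proof. by rewrite sqr_sqrtr // dotv_ge0. Qed.

Lemma normvN u : normv (- u) = normv u.
Proof. by rewrite /normv dotvNl dotvNr opprK. Qed.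

Lemma normvZ a u : normv (a *: u) = `|a| * normv u.
Proof. by rewrite /normv dotvZl dotvZr mulrA -expr2 sqrtrM ?sqr_ge0 // sqrtr_sqr. Qed.

Lemma dotv_le_sqr u c : normv u <= c -> dotv u u <= c ^+ 2.
Proof. by move=> uc; rewrite -normv_sqr lerXn2r ?nnegrE ?(le_trans (normv_ge0 u)). Qed.

Lemma normv_le_of_dotv u c : 0 <= c -> dotv u u <= c ^+ 2 -> normv u <= c.
Proof. by move=> c0 uc; rewrite -(ler_pXn2r (_ : 0 < 2)%N) ?nnegrE ?normv_ge0 ?normv_sqr. Qed.

Lemma cauchy_schwarz u v : dotv u v <= normv u * normv v.
Proof.
have [->|u0] := eqVneq u 0; first by rewrite dotv0l mulr_ge0 ?normv_ge0.
have [->|v0] := eqVneq v 0; first by rewrite dotvC dotv0l mulr_ge0 ?normv_ge0.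
have pos (w : 'rV[R]_n) : w != 0 -> 0 < normv w.
  by move=> w0; rewrite /normv sqrtr_gt0 lt_def dotv_eq0 w0 dotv_ge0.
have nu := pos _ u0; have nv := pos _ v0.
have := dotv_young u v (divr_gt0 nv nu); rewrite invf_div -!normv_sqr.
have -> : normv v / normv u * normv u ^+ 2 = normv u * normv v.
  by rewrite expr2 mulrA divfK ?gt_eqF // mulrC.
rewrite expr2 mulrA divfK ?gt_eqF //; lra.
Qed.

Lemma cauchy_schwarzN u v : - dotv u v <= normv u * normv v.
Proof. by rewrite -dotvNl -(normvN u) cauchy_schwarz. Qed.

Lemma ler_normvD u v : normv (u + v) <= normv u + normv v.
Proof.
apply: normv_le_of_dotv; first by rewrite addr_ge0 ?normv_ge0.
rewrite !(dotvDl, dotvDr) (dotvC v u) sqrrD !normv_sqr.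
have := cauchy_schwarz u v; lra.
Qed.

Lemma dotv_three_point u v z :
  2 * dotv (v - u) (z - u) = dotv (v - u) (v - u) + dotv (z - u) (z - u) - dotv (v - z) (v - z).
Proof.
have -> : v - z = (v - u) - (z - u) by rewrite opprB addrA subrK.
move: (v - u) (z - u) => a b; rewrite !(dotvBl, dotvBr) (dotvC b a); ring.
Qed.

Lemma sqr_dotvD_le_harmonic u v a r : 0 < a -> 0 < r ->
  (a^-1 + r^-1)^-1 * dotv (u + v) (u + v) <= a * dotv u u + r * dotv v v.
Proof.
move=> a0 r0; have ar0 : 0 < a + r by rewrite addr_gt0.
have -> : (a^-1 + r^-1)^-1 = a * r / (a + r) by field; rewrite ?gt_eqF.
rewrite mulrAC ler_pdivrMr // !(dotvDl, dotvDr) (dotvC v u).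
have Y : a * r * (2 * dotv u v) <= a * a * dotv u u + r * r * dotv v v.
  have := ler_wpM2l (ltW (mulr_gt0 a0 r0)) (dotv_young u v (divr_gt0 a0 r0)).
  rewrite invf_div mulrDr !mulrA.
  have -> : a * r * a / r = a * a by field; rewrite gt_eqF.
  by have -> : a * r * r / a = r * r by field; rewrite gt_eqF.
lra.
Qed.

Lemma dotv_avg u z (K : nat) (c : nat -> R) (v : nat -> 'rV[R]_n) :
  0 < \sum_(j < K) c j ->
  dotv u ((\sum_(j < K) c j)^-1 *: (\sum_(j < K) c j *: v j) - z) =
  (\sum_(j < K) c j)^-1 * \sum_(j < K) c j * dotv u (v j - z).
Proof.
move=> S0; rewrite dotvBr dotvZr dotv_sumr.
have -> : \sum_(j < K) c j * dotv u (v j - z) =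
    \sum_(j < K) c j * dotv u (v j) - (\sum_(j < K) c j) * dotv u z.
  by rewrite mulr_suml -sumrB; apply: eq_bigr => j _; rewrite dotvBr mulrBr.
by rewrite mulrBr mulrA mulVf ?gt_eqF // mul1r.
Qed.

End Euclidean.

Section Projection.
Variables (R : realType) (n : nat) (A : set 'rV[R]_n) (P : 'rV[R]_n -> 'rV[R]_n).
Hypotheses (cvxA : euc_convex_set A) (projA : is_euc_projection A P).

Lemma euc_projection_in z : A (P z).
Proof. by have [] := projA z. Qed.

Lemma euc_projection_obtuse z v : A v -> dotv (z - P z) (v - P z) <= 0.
Proof.
move=> Av; have [Au minP] := projA z; set u := P z in Au minP *.
have along t : 0 < t -> t <= 1 ->
    2 * dotv (z - u) (v - u) <= t * dotv (v - u) (v - u).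
  move=> t0 t1; have := minP _ (cvxA Av Au (ltW t0) t1).
  have -> : z - (t *: v + (1 - t) *: u) = (z - u) - t *: (v - u).
    by apply/rowP => i; rewrite !mxE; ring.
  move=> /dotv_le_sqr; rewrite normv_sqr; move: (z - u) (v - u) => e d.
  rewrite !(dotvBl, dotvBr, dotvZl, dotvZr) (dotvC d e) => h.
  rewrite -(ler_pM2l t0); lra.
set a := dotv (z - u) (v - u) in along *; set b := dotv (v - u) (v - u) in along.
rewrite leNgt; apply/negP => a0; have b0 : 0 <= b := dotv_ge0 _.
have ab0 : 0 < a + b by lra.
have := along (a / (a + b)); rewrite divr_gt0 // ler_pdivrMr // mul1r lerDl b0.
rewrite mulrAC ler_pdivlMr // => /(_ isT isT); nra.
Qed.

Lemma euc_projection_step w g v : A v ->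
  dotv (P (w - g) - v) (P (w - g) - v) <=
  dotv (w - v) (w - v) - dotv (w - P (w - g)) (w - P (w - g)) + 2 * dotv g (v - P (w - g)).
Proof.
move=> /(euc_projection_obtuse (w - g)); set p := P (w - g).
rewrite [w - g - p]addrAC [dotv (w - p - g) _]dotvBl.
by have := dotv_three_point p w v; rewrite (dotv_subC v p); lra.
Qed.

Lemma euc_projection_nonexp z v : A v ->
  dotv (P z - v) (P z - v) <= dotv (z - v) (z - v).
Proof.
move=> /(euc_projection_step z 0); rewrite subr0 dotv0l mulr0 addr0.
by have := dotv_ge0 (z - P z); lra.
Qed.

Lemma euc_convex_avg (K : nat) (c : nat -> R) (v : nat -> 'rV[R]_n) :
  (forall j, 0 < c j) -> (forall j, A (v j)) ->
  A ((\sum_(j < K.+1) c j)^-1 *: \sum_(j < K.+1) c j *: v j).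
Proof.
move=> c0 Av; elim: K => [|K IH].
  by rewrite !big_ord1 scalerA mulVf ?gt_eqF // scale1r.
set S := \sum_(j < K.+1) c j in IH; set V := \sum_(j < K.+1) c j *: v j in IH.
have S0 : 0 < S by rewrite /S big_ord_recr /= ltr_wpDl // sumr_ge0 // => j _; exact: ltW.
have SK : 0 < S + c K.+1 by rewrite addr_gt0.
have t0 : 0 <= S / (S + c K.+1) by rewrite divr_ge0 // ltW.
have t1 : S / (S + c K.+1) <= 1 by rewrite ler_pdivrMr // mul1r lerDl ltW.
have := cvxA IH (Av K.+1) t0 t1.
rewrite big_ord_recr /= -/S big_ord_recr /= -/V.
congr A; apply/rowP => i; rewrite !mxE; field; by rewrite !gt_eqF.
Qed.

End Projection.

Section Bounds.
Variables (R : realType) (n : nat).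

Lemma compact_normv_bounded (X : set 'rV[R]_n) : compact X ->
  exists B, forall x y, X x -> X y -> normv (x - y) <= B.
Proof.
move=> /compact_bounded [M [_ HM]]; set M' := `|M| + 1.
have hM' : M < M' by rewrite /M' (le_lt_trans (ler_norm M)) // ltrDl.
have M'0 : 0 <= M' by rewrite /M' addr_ge0.
have ent x i : X x -> `|x 0 i| <= M'.
  move=> Xx; apply: le_trans (HM _ hM' _ Xx).
  change (`|x 0 i| <= mx_norm x); rewrite mx_normrE.
  exact: (le_bigmax _ (fun ij : 'I_1 * 'I_n => `|x ij.1 ij.2|) (0, i)).
exists (Num.sqrt (n%:R * (2 * M') ^+ 2)) => x y Xx Xy.
apply: normv_le_of_dotv; first exact: sqrtr_ge0.
rewrite sqr_sqrtr ?mulr_ge0 ?exprn_ge0 ?mulr_ge0 //.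
have -> : n%:R * (2 * M') ^+ 2 = \sum_(i < n) (2 * M') ^+ 2.
  by rewrite sumr_const card_ord mulr_natl.
apply: ler_sum => i _; apply: le_trans (ler_norm _) _.
have xyi : `|(x - y) 0 i| <= 2 * M'.
  rewrite !mxE (le_trans (ler_normB _ _)) //.
  have := ent x i Xx; have := ent y i Xy; lra.
by rewrite normrM expr2 ler_pM.
Qed.

Lemma normv_le_diam (X : set 'rV[R]_n) x y : compact X -> X x -> X y ->
  normv (x - y) <= euc_diam X.
Proof.
move=> /compact_normv_bounded [B XB] Xx Xy; apply: sup_upper_bound; last by exists x, y.
split; first by exists (normv (x - y)), x, y.
by exists B => _ [a [b [Xa [Xb ->]]]]; exact: XB.
Qed.

Lemma lipschitz_on_compact_bounded (G : 'rV[R]_n -> 'rV[R]_n) (X D : set 'rV[R]_n) LG :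
  compact X -> X !=set0 -> X `<=` D -> 0 <= LG -> op_lipschitz_on D G LG ->
  exists M, forall u, X u -> normv (G u) <= M.
Proof.
move=> /compact_normv_bounded[B XB] [x0 Xx0] XD LG0 lipG.
exists (normv (G x0) + LG * B) => u Xu.
have -> : G u = G x0 + (G u - G x0) by rewrite addrC subrK.
rewrite (le_trans (ler_normvD _ _)) // lerD2l (le_trans (lipG _ _ (XD _ Xu) (XD _ Xx0))) //.
by rewrite ler_wpM2l ?XB.
Qed.

Variables (T : Type) (A : set T) (f : T -> R).

Lemma sup_image_ge M x : A x -> (forall x, A x -> f x <= M) ->
  f x <= sup [set r | exists x, A x /\ r = f x].
Proof.
move=> Ax fM; apply: sup_upper_bound; last by exists x.
by split; [exists (f x), x | exists M => _ [z [Az ->]]; exact: fM].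
Qed.

Lemma sup_image_le M : A !=set0 -> (forall x, A x -> f x <= M) ->
  sup [set r | exists x, A x /\ r = f x] <= M.
Proof.
move=> [a Aa] fM; apply: ge_sup; first by exists (f a), a.
by move=> _ [z [Az ->]]; exact: fM.
Qed.

Lemma inf_image_ge c : A !=set0 -> (forall x, A x -> c <= f x) ->
  c <= inf [set r | exists x, A x /\ r = f x].
Proof.
move=> [a Aa] fc; apply: lb_le_inf; first by exists (f a), a.
by move=> _ [z [Az ->]]; exact: fc.
Qed.

End Bounds.

Section ExtragradientStep.
Variables (R : realType) (n : nat) (G : 'rV[R]_n -> 'rV[R]_n) (X Om : set 'rV[R]_n).
Variables (PX POm : 'rV[R]_n -> 'rV[R]_n) (L m lam : R).
Hypotheses (cvxX : euc_convex_set X) (projX : is_euc_projection X PX).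
Hypotheses (cvxOm : euc_convex_set Om) (projOm : is_euc_projection Om POm) (XOm : X `<=` Om).
Hypotheses (lipG : op_lipschitz_on Om G L) (smG : op_strongly_monotone_on X G m).
Hypotheses (L0 : 0 <= L) (lam0 : 0 < lam).

Lemma extragradient_step u w y xp : X u ->
  y = PX (w - lam *: G (POm w)) -> xp = PX (w - lam *: G y) ->
  dotv (xp - u) (xp - u) <= dotv (w - u) (w - u)
    - (1 - lam ^+ 2 * L ^+ 2) * dotv (w - y) (w - y)
    - 2 * lam * m * dotv (y - u) (y - u) - 2 * lam * dotv (G u) (y - u).
Proof.
move=> Xu yE xpE; set wp := POm w.
have Xy : X y by rewrite yE; exact: (euc_projection_in projX).
have stepx := euc_projection_step cvxX projX w (lam *: G y) Xu; rewrite -xpE in stepx.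
have stepy := euc_projection_step cvxX projX w (lam *: G wp)
  (euc_projection_in projX (w - lam *: G y)).
rewrite -yE -xpE in stepy.
have lip : dotv (lam *: (G wp - G y)) (lam *: (G wp - G y))
    <= lam ^+ 2 * L ^+ 2 * dotv (w - y) (w - y).
  have wpOm : Om wp := euc_projection_in projOm w.
  have lipy := dotv_le_sqr (lipG wpOm (XOm Xy)).
  have nonexp := euc_projection_nonexp cvxOm projOm w (XOm Xy).
  rewrite -/wp in nonexp; rewrite dotvZl dotvZr mulrA -expr2 -mulrA.
  rewrite ler_wpM2l ?exprn_ge0 ?(ltW lam0) // (le_trans lipy) //.
  by rewrite exprMn normv_sqr ler_wpM2l ?exprn_ge0.
have young := dotv_young (lam *: (G wp - G y)) (xp - y) ltr01.
have mono : lam * (m * dotv (y - u) (y - u)) <= lam * dotv (G y - G u) (y - u).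
  by rewrite ler_pM2l // -normv_sqr smG.
have split_u : dotv (lam *: G y) (u - xp) =
    - (lam * dotv (G y) (y - u)) - lam * dotv (G y) (xp - y).
  have -> : u - xp = - (y - u) - (xp - y) by apply/rowP => i; rewrite !mxE; ring.
  by rewrite dotvZl (dotvBr (- (y - u))) dotvNr mulrBr mulrN.
move: young mono stepx stepy lip; rewrite split_u invr1 !mul1r (dotv_subC y xp).
rewrite (dotvZl lam (G wp - G y)) (dotvBl (G wp)) (dotvZl lam (G wp)) (dotvBl (G y)).
lra.
Qed.

End ExtragradientStep.

Lemma dotv_inertial (R : realType) (n : nat) (x0 x1 u : 'rV[R]_n) (a : R) :
  dotv (x1 + a *: (x1 - x0) - u) (x1 + a *: (x1 - x0) - u) =
  dotv (x1 - u) (x1 - u) + a * (dotv (x1 - u) (x1 - u) - dotv (x0 - u) (x0 - u))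
  + (a + a ^+ 2) * dotv (x1 - x0) (x1 - x0).
Proof.
have -> : x1 + a *: (x1 - x0) - u = (x1 - u) + a *: ((x1 - u) - (x0 - u)).
  by apply/rowP => i; rewrite !mxE; ring.
have -> : x1 - x0 = (x1 - u) - (x0 - u) by apply/rowP => i; rewrite !mxE; ring.
move: (x1 - u) (x0 - u) => e f.
by rewrite !(dotvDl, dotvDr, dotvNl, dotvNr, dotvZl, dotvZr) (dotvC f e); ring.
Qed.

Section InertialPotential.
Variables (R : realType) (phi g lam alpha beta : nat -> R) (D2 : R).
Hypotheses (phi_bound : forall k, 0 <= phi k <= D2) (beta01 : forall k, 0 < beta k < 1).
Hypotheses (alpha_ge0 : forall k, 0 <= alpha k) (alpha0_le1 : alpha 0%N <= 1).
Hypothesis alphaS : forall k, alpha k.+1 <= (1 - beta k) * alpha k.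
Hypothesis descent : forall k, phi k.+1 <= (1 - beta k) *
  (phi k + alpha k * (phi k - phi k.-1) + 2 * alpha k * D2) - 2 * lam k * g k.

Lemma prod1B_gt0 k : 0 < \prod_(i < k) (1 - beta i).
Proof. by apply: prodr_gt0 => i _; have := beta01 i; lra. Qed.

(* [U] is the Lyapunov function; [q k] is p_{k-1} in the notation of the statement. *)
Let q k := (\prod_(i < k) (1 - beta i))^-1.
Let gam k := q k * alpha k.
Let U k := q k * phi k - gam k * phi k.-1 + gam k * D2.

Let q_gt0 k : 0 < q k.
Proof. by rewrite invr_gt0 prod1B_gt0. Qed.

Let qS k : q k.+1 * (1 - beta k) = q k.
Proof.
rewrite /q big_ord_recr /= invfM -mulrA mulVf ?mulr1 //.
by have := beta01 k; rewrite subr_eq0 => /andP[_ /gt_eqF ->].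
Qed.

Let gamS k : gam k.+1 <= gam k.
Proof. by rewrite /gam -(qS k) -mulrA ler_pM2l. Qed.

Let gam_ge0 k : 0 <= gam k.
Proof. exact: mulr_ge0 (ltW (q_gt0 k)) (alpha_ge0 k). Qed.

Let gam_le1 k : gam k <= 1.
Proof.
elim: k => [|k IH]; last exact: le_trans (gamS k) IH.
by rewrite /gam /q big_ord0 invr1 mul1r.
Qed.

Let U_ge0 k : 0 <= U k.
Proof.
have /andP[phi0 _] := phi_bound k; have /andP[_ phiD] := phi_bound k.-1.
have := mulr_ge0 (ltW (q_gt0 k)) phi0.
have : gam k * phi k.-1 <= gam k * D2 by rewrite ler_wpM2l ?gam_ge0.
rewrite /U; lra.
Qed.

Let U0_le : U 0%N <= D2.
Proof.
rewrite /U /gam /q big_ord0 invr1 !mul1r /=; have /andP[_ phiD] := phi_bound 0%N.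
have : (1 - alpha 0%N) * phi 0%N <= (1 - alpha 0%N) * D2 by rewrite ler_wpM2l ?subr_ge0.
lra.
Qed.

Let U_step k : 2 * lam k * q k.+1 * g k + U k.+1 <= U k + 2 * D2.
Proof.
have := ler_wpM2l (ltW (q_gt0 k.+1)) (descent k).
rewrite mulrBr mulrA qS => st; have /andP[phi0 phiD] := phi_bound k.
have : (gam k - gam k.+1) * phi k <= (gam k - gam k.+1) * D2.
  by rewrite ler_wpM2l // subr_ge0.
have : gam k * D2 <= D2 by rewrite ler_piMl ?gam_le1 // (le_trans phi0).
move: st; rewrite /U /gam /=; lra.
Qed.

Lemma inertial_potential_sum K :
  2 * \sum_(k < K) lam k * (\prod_(i < k.+1) (1 - beta i))^-1 * g k <= (2 * K%:R + 1) * D2.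
Proof.
suff : 2 * \sum_(k < K) lam k * q k.+1 * g k + U K <= U 0%N + 2 * K%:R * D2.
  by have := U_ge0 K; have := U0_le; lra.
elim: K => [|K IH]; first by rewrite big_ord0 !mulr0 add0r mul0r addr0.
rewrite big_ord_recr /= -natr1; have := U_step K; lra.
Qed.

End InertialPotential.

Section IterationCount.
Variable R : realType.

Lemma expR_le_inv1B (b : R) : b < 1 -> expR b <= (1 - b)^-1.
Proof.
move=> b1; have b1' : 0 < 1 - b by rewrite subr_gt0.
rewrite -[expR b]invrK lef_pV2 ?posrE ?invr_gt0 ?expR_gt0 // -expRN.
exact: expR_ge1Dx.
Qed.

Lemma prod1B_inv_ge (beta : nat -> R) (c A : R) K :
  0 < c -> (forall k, c^-1 <= beta k < 1) -> c * ln A <= K%:R ->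
  A <= (\prod_(i < K) (1 - beta i))^-1.
Proof.
move=> c0 hb hK; have beta01 k : 0 < beta k < 1.
  by have /andP[cb ->] := hb k; rewrite (lt_le_trans _ cb) ?invr_gt0.
have [A0|A0] := lerP A 0.
  by rewrite (le_trans A0) // ltW // invr_gt0 prod1B_gt0.
rewrite -[A]lnK ?posrE // -prodfV (@le_trans _ _ (expR (\sum_(i < K) beta i))) //.
  rewrite ler_expR -(ler_pM2l c0) (le_trans hK) // mulr_sumr.
  have -> : K%:R = \sum_(i < K) (1 : R) by rewrite sumr_const card_ord.
  apply: ler_sum => i _; have /andP[cb _] := hb i.
  by rewrite -(divff (lt0r_neq0 c0)) ler_pM2l.
rewrite expR_sum; apply: ler_prod => i _; have /andP[_ b1] := beta01 i.
by rewrite expR_ge0 expR_le_inv1B.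
Qed.

End IterationCount.

Lemma prev_iterE (R : realType) (n : nat) (x : nat -> 'rV[R]_n) k : prev_iter x k = x k.-1.
Proof. by case: k. Qed.

Section InertialExtragradient.
Variables (R : realType) (n : nat) (G : 'rV[R]_n -> 'rV[R]_n) (X Om : set 'rV[R]_n).
Variables (PX POm : 'rV[R]_n -> 'rV[R]_n) (L m D : R) (lam alpha beta : nat -> R).
Variables (x y w w' : nat -> 'rV[R]_n).
Hypotheses (cvxX : euc_convex_set X) (projX : is_euc_projection X PX).
Hypotheses (cvxOm : euc_convex_set Om) (projOm : is_euc_projection Om POm) (XOm : X `<=` Om).
Hypotheses (lipG : op_lipschitz_on Om G L) (smG : op_strongly_monotone_on X G m).
Hypotheses (L0 : 0 <= L) (m0 : 0 < m) (lam0 : forall k, 0 < lam k).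
Hypothesis lamL : forall k, lam k * L < 1.
Hypothesis diamX : forall a b, X a -> X b -> normv (a - b) <= D.
Hypothesis betaE : forall k,
  beta k = ((1 - lam k ^+ 2 * L ^+ 2)^-1 + (2 * lam k * m)^-1)^-1.
Hypotheses (alpha_ge0 : forall k, 0 <= alpha k) (alpha0_le1 : alpha 0%N <= 1).
Hypothesis alphaS : forall k, alpha k.+1 <= (1 - beta k) * alpha k.
Hypotheses (x0X : X (x 0%N)) (wE : forall k, w k = x k + alpha k *: (x k - prev_iter x k)).
Hypothesis w'E : forall k, w' k = POm (w k).
Hypothesis yE : forall k, y k = PX (w k - lam k *: G (w' k)).
Hypothesis xE : forall k, x k.+1 = PX (w k - lam k *: G (y k)).

Lemma stepsize_factor_gt0 k : 0 < 1 - lam k ^+ 2 * L ^+ 2.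
Proof. by have := lamL k; have := mulr_ge0 (ltW (lam0 k)) L0; rewrite -exprMn; nra. Qed.

Lemma beta01 k : 0 < beta k < 1.
Proof.
have a0 := stepsize_factor_gt0 k; have b0 : 0 < 2 * lam k * m by rewrite !mulr_gt0.
rewrite betaE invr_gt0 invf_lt1 ?addr_gt0 ?invr_gt0 //=.
have : 1 <= (1 - lam k ^+ 2 * L ^+ 2)^-1.
  by rewrite invf_ge1 // gerBl mulr_ge0 ?sqr_ge0.
by rewrite -invr_gt0 in b0; lra.
Qed.

Lemma beta_ge llam ulam k : 0 < llam -> llam <= lam k -> lam k <= ulam -> ulam * L < 1 ->
  ((1 - ulam ^+ 2 * L ^+ 2)^-1 + (2 * llam * m)^-1)^-1 <= beta k.
Proof.
move=> llam0 ll lu uL; have lamk0 := stepsize_factor_gt0 k.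
have ulam0 : 0 <= ulam by rewrite (le_trans (ltW llam0)) ?(le_trans ll).
have u0 : 0 < 1 - ulam ^+ 2 * L ^+ 2.
  by have := mulr_ge0 ulam0 L0; rewrite -exprMn; nra.
rewrite betaE lef_pV2 ?posrE ?addr_gt0 ?invr_gt0 ?mulr_gt0 //.
rewrite lerD // lef_pV2 ?posrE ?mulr_gt0 //.
  by rewrite lerD2l lerN2 -!exprMn lerXn2r ?nnegrE ?mulr_ge0 ?ler_wpM2r ?(ltW (lam0 k)).
by rewrite ler_pM2r // ler_pM2l.
Qed.

Lemma iteration_count_prod_ge llam ulam A K : 0 < llam ->
  (forall k, llam <= lam k /\ lam k <= ulam) -> ulam * L < 1 ->
  ((1 - ulam ^+ 2 * L ^+ 2)^-1 + (2 * llam * m)^-1) * ln A <= K%:R ->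
  A <= (\prod_(i < K) (1 - beta i))^-1.
Proof.
move=> llam0 lam_in uL; apply: prod1B_inv_ge => [|k].
  have [ll lu] := lam_in 0%N.
  have uL0 : 0 <= ulam * L := mulr_ge0 (le_trans (ltW llam0) (le_trans ll lu)) L0.
  by rewrite addr_gt0 ?invr_gt0 ?mulr_gt0 //; nra.
have [ll lu] := lam_in k; rewrite beta_ge //.
by case/andP: (beta01 k).
Qed.

Lemma alpha_le1 k : alpha k <= 1.
Proof.
elim: k => [//|k IH]; apply: le_trans (alphaS k) _.
by have /andP[b0 b1] := beta01 k; have := alpha_ge0 k; nra.
Qed.

Lemma iterate_in k : X (x k).
Proof. by case: k => [//|k]; rewrite xE; exact: (euc_projection_in projX). Qed.

Lemma extrapolated_in k : X (y k).
Proof. by rewrite yE; exact: (euc_projection_in projX). Qed.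

Lemma iterate_descent u k : X u ->
  dotv (x k.+1 - u) (x k.+1 - u) <= (1 - beta k) * (dotv (x k - u) (x k - u)
    + alpha k * (dotv (x k - u) (x k - u) - dotv (x k.-1 - u) (x k.-1 - u))
    + 2 * alpha k * D ^+ 2) - 2 * lam k * dotv (G u) (y k - u).
Proof.
move=> Xu; have yk : y k = PX (w k - lam k *: G (POm (w k))) by rewrite yE w'E.
have step := extragradient_step cvxX projX cvxOm projOm XOm lipG smG L0 (lam0 k) Xu yk (xE k).
have b0 : 0 < 2 * lam k * m by rewrite !mulr_gt0.
have := sqr_dotvD_le_harmonic (w k - y k) (y k - u) (stepsize_factor_gt0 k) b0.
rewrite -betaE addrA subrK => harm.
have wu : dotv (w k - u) (w k - u) <= dotv (x k - u) (x k - u)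
    + alpha k * (dotv (x k - u) (x k - u) - dotv (x k.-1 - u) (x k.-1 - u))
    + 2 * alpha k * D ^+ 2.
  rewrite wE prev_iterE dotv_inertial lerD2l.
  have jump := dotv_le_sqr (diamX (iterate_in k) (iterate_in k.-1)).
  have a0 := alpha_ge0 k; have a1 := alpha_le1 k.
  apply: le_trans (_ : (alpha k + alpha k ^+ 2) * D ^+ 2 <= _).
    by rewrite ler_wpM2l ?addr_ge0 ?exprn_ge0.
  have : alpha k ^+ 2 <= alpha k by rewrite expr2 ler_piMl.
  by move=> ?; apply: ler_wpM2r; [exact: sqr_ge0 | lra].
have /andP[_ b1] := beta01 k; have b1' : 0 <= 1 - beta k by rewrite subr_ge0 ltW.
have := ler_wpM2l b1' wu; lra.
Qed.

Let p j := (\prod_(i < j.+1) (1 - beta i))^-1.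

Let p_gt0 j : 0 < p j.
Proof. by rewrite invr_gt0 (prod1B_gt0 beta01). Qed.

Lemma weighted_gap_sum_le u K : X u ->
  2 * \sum_(j < K) lam j * p j * dotv (G u) (y j - u) <= (2 * K%:R + 1) * D ^+ 2.
Proof.
move=> Xu; have phi_bound k : 0 <= dotv (x k - u) (x k - u) <= D ^+ 2.
  by rewrite dotv_ge0 dotv_le_sqr // diamX //; exact: iterate_in.
exact: (inertial_potential_sum phi_bound beta01 alpha_ge0 alpha0_le1 alphaS
  (fun k => iterate_descent k Xu)).
Qed.

Lemma averaged_gap_le u K s r llam : X u -> 0 < s -> 0 < llam ->
  (forall k, llam <= lam k) ->
  (2 * K.+1%:R + 1) * D ^+ 2 <= 2 * r * llam * p K ->
  dotv (G u) ((\sum_(j < K.+1) lam j * s * p j)^-1 *: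
              \sum_(j < K.+1) (lam j * s * p j) *: y j - u) <= r.
Proof.
move=> Xu s0 llam0 llam_le enough.
have r0 : 0 <= r.
  have : 0 <= 2 * r * llam * p K.
    by rewrite (le_trans _ enough) // mulr_ge0 ?sqr_ge0 // addr_ge0 ?mulr_ge0.
  have := mulr_gt0 llam0 (p_gt0 K); nra.
set Lam := \sum_(j < K.+1) lam j * s * p j.
have Lam_ge : s * (llam * p K) <= Lam.
  rewrite /Lam big_ord_recr /= ler_wpDl //.
    by apply: sumr_ge0 => j _; rewrite ltW // !mulr_gt0.
  have := ler_wpM2r (ltW (mulr_gt0 s0 (p_gt0 K))) (llam_le K); lra.
have Lam0 : 0 < Lam by rewrite (lt_le_trans _ Lam_ge) // !mulr_gt0.
rewrite /Lam (@dotv_avg _ _ (G u) u K.+1 (fun j => lam j * s * p j) y) -/Lam // ler_pdivrMl //.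
have -> : \sum_(j < K.+1) lam j * s * p j * dotv (G u) (y j - u) =
    s * \sum_(j < K.+1) lam j * p j * dotv (G u) (y j - u).
  by rewrite mulr_sumr; apply: eq_bigr => j _; ring.
have := weighted_gap_sum_le K.+1 Xu; have := ler_wpM2l r0 Lam_ge.
have := ler_pM2l s0; nra.
Qed.

Lemma averaged_extrapolated_in K s : 0 < s ->
  X ((\sum_(j < K.+1) lam j * s * p j)^-1 *: \sum_(j < K.+1) (lam j * s * p j) *: y j).
Proof.
move=> s0; apply: (euc_convex_avg cvxX K (c := fun j => lam j * s * p j) _ extrapolated_in).
by move=> j; rewrite !mulr_gt0.
Qed.

End InertialExtragradient.

Section GapBounds.
Variables (R : realType) (n : nat) (F H : 'rV[R]_n -> 'rV[R]_n) (X : set 'rV[R]_n).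
Variables (z : 'rV[R]_n) (eps : R).
Let Q := VIsol F X.
Hypotheses (Xz : X z) (Q0 : Q !=set0).
Hypothesis H_bounded : exists M, forall x, X x -> normv (H x) <= M.
Hypothesis gapH : forall x, Q x -> dotv (H x) (z - x) <= eps.
Hypothesis gapF : forall x, X x -> dotv (F x) (z - x) <= eps.

Lemma Gap_VIsol_le : Gap z H Q <= eps.
Proof. exact: (sup_image_le (f := fun x => dotv (H x) (z - x))). Qed.

Lemma Gap_le : Gap z F X <= eps.
Proof. by apply: (sup_image_le (f := fun x => dotv (F x) (z - x))); first by exists z. Qed.

Lemma Gap_ge0 : 0 <= Gap z F X.
Proof.
have [xs [Xxs solxs]] := Q0; apply: le_trans (solxs _ Xz) _.
exact: (sup_image_ge (f := fun x => dotv (F x) (z - x)) Xxs gapF).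
Qed.

Lemma normv_le_supnorm x : Q x -> normv (H x) <= euc_supnorm H Q.
Proof.
have [M HM] := H_bounded => Qx.
by apply: (sup_image_ge (f := fun x => normv (H x))) => // y [Xy _]; exact: HM.
Qed.

Lemma euc_dist_ge0 : 0 <= euc_dist z Q.
Proof. by apply: (inf_image_ge (f := fun x => normv (z - x))) => // x _; exact: normv_ge0. Qed.

Lemma Gap_VIsol_ge_dist : - euc_supnorm H Q * euc_dist z Q <= Gap z H Q.
Proof.
set BH := euc_supnorm H Q.
have low x : Q x -> - BH * normv (z - x) <= Gap z H Q.
  move=> Qx; apply: le_trans (sup_image_ge (f := fun x => dotv (H x) (z - x)) Qx gapH).
  rewrite mulNr lerNl; apply: le_trans (cauchy_schwarzN _ _) _.
  by rewrite ler_wpM2r ?normv_ge0 ?normv_le_supnorm.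
have [xs Qxs] := Q0; have BH0 : 0 <= BH := le_trans (normv_ge0 _) (normv_le_supnorm Qxs).
have [BHz|BHn0] := eqVneq BH 0.
  by have := low xs Qxs; rewrite BHz oppr0 !mul0r.
have BHp : 0 < BH by rewrite lt_def BHn0.
have : - Gap z H Q / BH <= euc_dist z Q.
  apply: (inf_image_ge (f := fun x => normv (z - x))) => // x Qx.
  by rewrite ler_pdivrMr // mulrC -lerNl -mulNr low.
by rewrite ler_pdivrMr // mulrC -lerNl -mulNr.
Qed.

Lemma euc_dist_le_weakly_sharp sigma M : 0 < sigma -> 0 < M ->
  euc_weakly_sharp F X Q sigma M ->
  sigma `^ M^-1 * euc_dist z Q <= eps `^ M^-1.
Proof.
move=> sigma0 M0 sharp; have [xs Qxs] := Q0.
have sdM := le_trans (sharp _ _ Qxs Xz) (gapF (proj1 Qxs)).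
have nn1 : sigma * euc_dist z Q `^ M \in Num.nneg.
  by rewrite nnegrE mulr_ge0 ?powR_ge0 ?ltW.
have nn2 : eps \in Num.nneg by rewrite nnegrE (le_trans _ sdM) // -nnegrE.
have r0 : 0 <= M^-1 by rewrite invr_ge0 ltW.
have := ge0_ler_powR r0 nn1 nn2 sdM.
rewrite powRM ?(ltW sigma0) ?powR_ge0 // -powRrM mulfV ?gt_eqF //.
by rewrite powRr1 ?euc_dist_ge0.
Qed.

Lemma Gap_VIsol_ge_weakly_sharp sigma M : 0 < sigma -> 0 < M ->
  euc_weakly_sharp F X Q sigma M ->
  - (euc_supnorm H Q / sigma `^ M^-1) * eps `^ M^-1 <= Gap z H Q.
Proof.
move=> sigma0 M0 sharp; apply: le_trans Gap_VIsol_ge_dist.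
have [xs Qxs] := Q0; have BH0 := le_trans (normv_ge0 _) (normv_le_supnorm Qxs).
have sr0 : 0 < sigma `^ M^-1 by rewrite powR_gt0.
have := ler_wpM2l BH0 (euc_dist_le_weakly_sharp sigma0 M0 sharp).
by rewrite !mulNr lerN2 mulrAC ler_pdivlMr //; lra.
Qed.

Lemma VIsol_gap_bounds :
  ((- euc_supnorm H Q * euc_dist z Q <= Gap z H Q /\ Gap z H Q <= eps)
   /\ (0 <= Gap z F X /\ Gap z F X <= eps))
  /\ (forall sigma M : R, 0 < sigma -> 1 <= M -> euc_weakly_sharp F X Q sigma M ->
        - (euc_supnorm H Q / sigma `^ M^-1) * eps `^ M^-1 <= Gap z H Q).
Proof.
split; last by move=> sigma M sigma0 M1; apply: Gap_VIsol_ge_weakly_sharp; lra.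
by split; split; [exact: Gap_VIsol_ge_dist | exact: Gap_VIsol_le | exact: Gap_ge0 | exact: Gap_le].
Qed.

End GapBounds.

Section Regularization.
Variables (R : realType) (n : nat) (F H : 'rV[R]_n -> 'rV[R]_n) (eta : R).
Hypothesis eta_ge0 : 0 <= eta.

Lemma regularized_lipschitz (DomF DomH Om : set 'rV[R]_n) LF LH :
  Om `<=` DomF `&` DomH -> op_lipschitz_on DomF F LF -> op_lipschitz_on DomH H LH ->
  op_lipschitz_on Om (fun z => F z + eta *: H z) (LF + eta * LH).
Proof.
move=> OmD lipF lipH a b /OmD[Fa Ha] /OmD[Fb Hb].
have -> : F a + eta *: H a - (F b + eta *: H b) = (F a - F b) + eta *: (H a - H b).
  by apply/rowP => i; rewrite !mxE; ring.
apply: le_trans (ler_normvD _ _) _; rewrite normvZ ger0_norm // mulrDl -mulrA.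
by rewrite lerD ?lipF // ler_wpM2l ?lipH.
Qed.

Lemma regularized_strongly_monotone (DomF DomH X : set 'rV[R]_n) mu :
  X `<=` DomF `&` DomH -> op_monotone_on DomF F -> op_strongly_monotone_on DomH H mu ->
  op_strongly_monotone_on X (fun z => F z + eta *: H z) (eta * mu).
Proof.
move=> XD monF smH a b /XD[Fa Ha] /XD[Fb Hb].
have -> : F a + eta *: H a - (F b + eta *: H b) = (F a - F b) + eta *: (H a - H b).
  by apply/rowP => i; rewrite !mxE; ring.
by rewrite dotvDl dotvZl -mulrA -[X in X <= _]add0r lerD ?monF // ler_wpM2l ?smH.
Qed.

Variables (X : set 'rV[R]_n) (z : 'rV[R]_n) (eps : R).
Hypothesis regularized_gap :
  forall u, X u -> dotv (F u + eta *: H u) (z - u) <= eta * eps.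

Lemma VIsol_dotv_le : X z -> 0 < eta ->
  forall u, VIsol F X u -> dotv (H u) (z - u) <= eps.
Proof.
move=> Xz eta0 u [Xu solu]; have := regularized_gap Xu; have := solu _ Xz.
rewrite dotvDl dotvZl => sol reg; rewrite -(ler_pM2l eta0); lra.
Qed.

Lemma dotv_le_regularized CH D : (forall u, X u -> normv (H u) <= CH) ->
  (forall u, X u -> normv (z - u) <= D) ->
  forall u, X u -> dotv (F u) (z - u) <= eta * (eps + CH * D).
Proof.
move=> HCH zD u Xu; have := regularized_gap Xu; rewrite dotvDl dotvZl.
have : - dotv (H u) (z - u) <= CH * D.
  by rewrite (le_trans (cauchy_schwarzN _ _)) // ler_pM ?normv_ge0 ?HCH ?zD.
move=> /(ler_wpM2l eta_ge0); lra.
Qed.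

Lemma regularized_gap_bounds D : X z -> 0 < eta -> VIsol F X !=set0 ->
  (exists M, forall u, X u -> normv (H u) <= M) ->
  (forall a b, X a -> X b -> normv (a - b) <= D) ->
  eta * (eps + euc_supnorm H X * D) <= eps ->
  ((- euc_supnorm H (VIsol F X) * euc_dist z (VIsol F X) <= Gap z H (VIsol F X)
    /\ Gap z H (VIsol F X) <= eps)
   /\ (0 <= Gap z F X /\ Gap z F X <= eps))
  /\ (forall sigma M : R, 0 < sigma -> 1 <= M -> euc_weakly_sharp F X (VIsol F X) sigma M ->
        - (euc_supnorm H (VIsol F X) / sigma `^ M^-1) * eps `^ M^-1 <= Gap z H (VIsol F X)).
Proof.
move=> Xz eta0 Q0 [M HM] diamX budget.
have HCH u : X u -> normv (H u) <= euc_supnorm H X.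
  by move=> Xu; apply: (sup_image_ge (f := fun x => normv (H x))) Xu HM.
apply: VIsol_gap_bounds => //; first by exists M.
  exact: VIsol_dotv_le.
move=> u Xu; apply: le_trans budget.
exact: dotv_le_regularized HCH (fun v => diamX _ _ Xz) u Xu.
Qed.

End Regularization.

Lemma regularization_budget (R : realType) (eps D0 eta llam ulam CH D : R) :
  0 < eps -> eps < D0 -> eta = eps / (2 * D0) -> 0 < llam -> llam <= ulam ->
  ulam * CH * D / llam <= D0 -> eta * (eps + CH * D) <= eps.
Proof.
move=> eps0 epsD0 -> llam0 lle hD0; have D00 : 0 < D0 := lt_trans eps0 epsD0.
have CHD : CH * D <= D0.
  have [CHD0|CHD0] := lerP (CH * D) 0; first exact: le_trans CHD0 (ltW D00).
  apply: le_trans hD0; rewrite ler_pdivlMr //.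
  have := ler_wpM2r (ltW CHD0) lle; lra.
rewrite mulrAC ler_pdivrMr ?mulr_gt0 // ler_pM2l //; lra.
Qed.

Lemma iteration_count_enough (R : realType) (k : nat) (eps D0 eta llam D P : R) :
  0 < eps -> eps < D0 -> 0 < llam -> eta = eps / (2 * D0) ->
  2 * k.+2%:R * D ^+ 2 * D0 / (llam * eps ^+ 2) <= P ->
  (2 * k.+1%:R + 1) * D ^+ 2 <= 2 * (eta * eps) * llam * P.
Proof.
move=> eps0 epsD0 llam0 -> AP; have D00 : 0 < D0 := lt_trans eps0 epsD0.
have E : 2 * (eps / (2 * D0) * eps) * llam * (2 * k.+2%:R * D ^+ 2 * D0 / (llam * eps ^+ 2))
    = 2 * k.+2%:R * D ^+ 2 by field; rewrite !gt_eqF.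
apply: le_trans (_ : 2 * k.+2%:R * D ^+ 2 <= _).
  have -> : k.+2%:R = k.+1%:R + 1 :> R by rewrite -natr1.
  by rewrite ler_wpM2r ?sqr_ge0 //; lra.
by rewrite -E ler_pM2l // !mulr_gt0 ?invr_gt0 ?mulr_gt0.
Qed.

Unset Implicit Arguments.

Theorem theorem4p20 (R : realType) (n : nat)
  (F H : 'rV[R]_n -> 'rV[R]_n) (DomF DomH X Omega : set 'rV[R]_n)
  (LF LH mu : R) (PX POm : 'rV[R]_n -> 'rV[R]_n)
  (eps D0 eta llam ulam : R) (lam alpha : nat -> R)
  (x y w w' : nat -> 'rV[R]_n) :
  (* standing assumptions *)
  0 < LF -> 0 < LH ->
  op_monotone_on DomF F -> op_lipschitz_on DomF F LF ->
  op_monotone_on DomH H -> op_lipschitz_on DomH H LH ->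
  0 < mu -> op_strongly_monotone_on DomH H mu ->
  X !=set0 -> compact X -> euc_convex_set X ->
  Omega !=set0 -> closed Omega -> euc_convex_set Omega ->
  subset X Omega -> subset Omega (setI DomF DomH) ->
  is_euc_projection X PX -> is_euc_projection Omega POm ->
  VIsol F X !=set0 ->
  (* parameters *)
  0 < eps -> eps < D0 ->
  ulam * euc_supnorm H X * euc_diam X / llam <= D0 ->
  eta = eps / (2 * D0) ->
  0 < llam -> llam <= ulam -> ulam < (LF + eta * LH)^-1 ->
  (forall k, llam <= lam k /\ lam k <= ulam) ->
  (forall k, 0 <= alpha k) ->
  alpha 0%N <= 1 ->
  (let L := LF + eta * LH in
   let beta k := ((1 - lam k ^+ 2 * L ^+ 2)^-1 + (2 * lam k * eta * mu)^-1)^-1 in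
   forall k, alpha k.+1 <= (1 - beta k) * alpha k) ->
  (* the IneIREG iteration *)
  X (x 0%N) ->
  (forall k, w k = x k + alpha k *: (x k - prev_iter x k)) ->
  (forall k, w' k = POm (w k)) ->
  (forall k, y k = PX (w k - lam k *: (F (w' k) + eta *: H (w' k)))) ->
  (forall k, x k.+1 = PX (w k - lam k *: (F (y k) + eta *: H (y k)))) ->
  let L := LF + eta * LH in
  let beta k := ((1 - lam k ^+ 2 * L ^+ 2)^-1 + (2 * lam k * eta * mu)^-1)^-1 in
  let p k := (\prod_(i < k.+1) (1 - beta i))^-1 in
  let Lambda k := \sum_(j < k) lam j * eta * p j in
  let ybar k := (Lambda k)^-1 *: \sum_(j < k) (lam j * eta * p j) *: y j in
  let Q := VIsol F X in
  let BH := euc_supnorm H Q in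
  forall k : nat, (1 <= k)%N ->
    Num.ceil (((1 - ulam ^+ 2 * L ^+ 2)^-1 + D0 / (llam * mu * eps))
              * ln (2 * (k.+1)%:R * euc_diam X ^+ 2 * D0 / (llam * eps ^+ 2)))
      <= k%:Z ->
    ((- BH * euc_dist (ybar k) Q <= Gap (ybar k) H Q /\ Gap (ybar k) H Q <= eps)
     /\ (0 <= Gap (ybar k) F X /\ Gap (ybar k) F X <= eps))
    /\ (forall sigma M : R, 0 < sigma -> 1 <= M -> euc_weakly_sharp F X Q sigma M ->
          - (BH / sigma `^ M^-1) * eps `^ M^-1 <= Gap (ybar k) H Q).
Proof.
move=> LF0 LH0 monF lipF monH lipH mu0 smH X0 cptX cvxX _ _ cvxO XO OD pX pO Q0
  eps0 epsD0 hD0 etaE llam0 lle ulL hlam alpha_ge0 alpha0_le1 alphaS x0X wE w'E yE xE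
  L beta p Lambda ybar Q BH [//|k] _.
have eta0 : 0 < eta by rewrite etaE divr_gt0 ?mulr_gt0 ?(lt_trans eps0 epsD0).
have m0 : 0 < eta * mu := mulr_gt0 eta0 mu0.
have Lpos : 0 < L by rewrite addr_gt0 ?mulr_gt0.
have uL : ulam * L < 1 by rewrite -(ltr_pM2r Lpos) mulVf ?gt_eqF in ulL.
have L0 := ltW Lpos.
have lam0 j : 0 < lam j := lt_le_trans llam0 (proj1 (hlam j)).
have lamL j : lam j * L < 1 := le_lt_trans (ler_wpM2r L0 (proj2 (hlam j))) uL.
have betaE j : beta j = ((1 - lam j ^+ 2 * L ^+ 2)^-1 + (2 * lam j * (eta * mu))^-1)^-1.
  by rewrite /beta mulrA.
have XD : X `<=` DomF `&` DomH by move=> u /XO /OD.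
have Glip := regularized_lipschitz (ltW eta0) OD lipF lipH.
have Gsm := regularized_strongly_monotone (ltW eta0) XD monF smH.
have diamX a b : X a -> X b -> normv (a - b) <= euc_diam X := normv_le_diam cptX.
rewrite ceil_le_int (_ : D0 / (llam * mu * eps) = (2 * llam * (eta * mu))^-1); last first.
  by rewrite etaE; field; rewrite !gt_eqF ?(lt_trans eps0 epsD0).
move=> /(iteration_count_prod_ge L0 m0 lam0 lamL betaE llam0 hlam uL).
move=> /(iteration_count_enough eps0 epsD0 llam0 etaE) enough.
have avg u : X u -> dotv (F u + eta *: H u) (ybar k.+1 - u) <= eta * eps.
  move=> Xu; have llam_le j : llam <= lam j by case: (hlam j).
  exact: (averaged_gap_le cvxX pX cvxO pO XO Glip Gsm L0 m0 lam0 lamL diamX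
    betaE alpha_ge0 alpha0_le1 alphaS x0X wE w'E yE xE Xu eta0 llam0 llam_le enough).
have ybarX : X (ybar k.+1) := averaged_extrapolated_in (G := fun z => F z + eta *: H z)
  cvxX pX L0 m0 lam0 lamL betaE yE k eta0.
have Hbd := lipschitz_on_compact_bounded cptX X0 (fun u Xu => (XD u Xu).2) (ltW LH0) lipH.
apply: (regularized_gap_bounds (ltW eta0) avg ybarX eta0 Q0 Hbd diamX).
exact: regularization_budget eps0 epsD0 etaE llam0 lle hD0.
Qed.
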